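(* Let $M$ be a finite-horizon (reward-free) MDP, let $\Pi\subseteq\Pi_{\mathrm{RNS}}$ be a set of policies, and fix a layer $h\in[H]$. For any distribution $p\in\Delta(\Pi_{\mathrm{RNS}})$, for all functions $g:\mathcal{X}\times\mathcal{A}\to[0,B]$, all $\pi\in\Pi$, and all $\varepsilon>0$, $$\mathbb{E}^{M,\pi}\big[g(x_h,a_h)\big]\le 2\sqrt{\Psi^{M}_{h,\varepsilon}(p)\cdot\mathbb{E}^{M,p}\big[g^2(x_h,a_h)\big]}+\Psi^{M}_{h,\varepsilon}(p)\cdot(\varepsilon B).$$
   Context: An episodic reward-free MDP $M$ has countable state space $\mathcal{X}$, action space $\mathcal{A}$, horizon $H$, initial distribution $P_0$ and transitions $P^M_h:\mathcal{X}\times\mathcal{A}\to\Delta(\mathcal{X})$. A randomized non-stationary policy is $\pi=(\pi_1,\dots,\pi_H)$ with $\pi_h:\mathcal{X}\to\Delta(\mathcal{A})$; $\Pi_{\mathrm{RNS}}$ is the set of all such policies. An episode: $x_1\sim P_0$, $a_h\sim\pi_h(x_h)$, $x_{h+1}\sim P^M_h(\cdot\mid x_h,a_h)$; $\mathbb{E}^{M,\pi}$ denotes expectation under this process, and $d^{M,\pi}_h(x,a)=\mathbb{P}^{M,\pi}[x_h=x,a_h=a]$. For $p\in\Delta(\Pi_{\mathrm{RNS}})$, $d^{M,p}_h=\mathbb{E}_{\pi\sim p}[d^{M,\pi}_h]$ and $\mathbb{E}^{M,p}$ denotes expectation when first $\pi\sim p$ is drawn and then executed. The $L_1$-Coverage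 objective is $$\Psi^M_{h,\varepsilon}(p)=\sup_{\pi\in\Pi}\mathbb{E}^{M,\pi}\Big[\frac{d^{M,\pi}_h(x_h,a_h)}{d^{M,p}_h(x_h,a_h)+\varepsilon\, d^{M,\pi}_h(x_h,a_h)}\Big].$$ *)

From HB Require Import structures.
From mathcomp Require Import all_boot all_order all_algebra.
From mathcomp Require Import all_classical all_reals all_analysis.
Set Implicit Arguments. Unset Strict Implicit. Unset Printing Implicit Defensive.
Import Order.TTheory GRing.Theory Num.Theory.
Local Open Scope classical_set_scope.
Local Open Scope ring_scope.

(* Layers are 0-based: paper layer h in [H] is our index h-1, 0 <= h-1 < H. *)
Section MDP.
Context {R : realType} {X A : countType}.

Definition psum {T : choiceType} (f : T -> R) : \bar R :=
  \esum_(t in [set: T]) (f t)%:E.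

Definition is_dist {T : choiceType} (q : T -> R) : Prop :=
  (forall t, 0 <= q t) /\ psum q = 1%E.

(* randomized non-stationary mdp_policy: pi h x is a distribution over actions *)
Definition mdp_policy := nat -> X -> A -> R.
(* transition kernels: P h x a is a distribution over next states *)
Definition mdp_kernel := nat -> X -> A -> X -> R.

Definition is_policy (H : nat) (pi : mdp_policy) : Prop :=
  forall h x, (h < H)%N -> is_dist (pi h x).

Definition is_mdp (H : nat) (P0 : X -> R) (P : mdp_kernel) : Prop :=
  is_dist P0 /\ forall h x a, (h < H)%N -> is_dist (P h x a).

(* occupancy d^{M,pi}_h(x,a) = P^{M,pi}[x_h = x, a_h = a] *)
Fixpoint occ (P0 : X -> R) (P : mdp_kernel) (pi : mdp_policy) (h : nat) : X -> A -> R :=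
  match h with
  | 0 => fun x a => P0 x * pi 0%N x a
  | h'.+1 => fun x' a' =>
      fine (\esum_(xa in [set: (X * A)%type])
              (occ P0 P pi h' xa.1 xa.2 * P h' xa.1 xa.2 x')%:E)
      * pi h'.+1 x' a'
  end.

Definition Epi (P0 : X -> R) (P : mdp_kernel) (pi : mdp_policy) (h : nat)
  (f : X -> A -> R) : \bar R :=
  \esum_(xa in [set: (X * A)%type]) (occ P0 P pi h xa.1 xa.2 * f xa.1 xa.2)%:E.

(* p in Delta(Pi_RNS) is represented by a probability space (I, Pp) and a
   mdp_policy-valued map pol : I -> mdp_policy (p = law of pol under Pp). *)
Definition occ_mix {d : measure_display} {I : measurableType d}
  (Pp : probability I R) (pol : I -> mdp_policy)
  (P0 : X -> R) (P : mdp_kernel) (h : nat) (x : X) (a : A) : R :=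
  fine (\int[Pp]_i (occ P0 P (pol i) h x a)%:E).

Definition Emix {d : measure_display} {I : measurableType d}
  (Pp : probability I R) (pol : I -> mdp_policy)
  (P0 : X -> R) (P : mdp_kernel) (h : nat) (f : X -> A -> R) : \bar R :=
  \int[Pp]_i Epi P0 P (pol i) h f.

(* L1-Coverage objective Psi^M_{h,eps}(p); the integrand
   d^pi/(d^p + eps d^pi) is weighted by d^pi, so where d^pi = 0 the summand
   is 0 (convention 0 * (0/0) = 0). *)
Definition Psi {d : measure_display} {I : measurableType d}
  (Pp : probability I R) (pol : I -> mdp_policy)
  (P0 : X -> R) (P : mdp_kernel) (Pi : set mdp_policy) (h : nat) (eps : R) : \bar R :=
  ereal_sup [set Epi P0 P pi h
      (fun x a => let dpi := occ P0 P pi h x a in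
                  if dpi == 0 then 0
                  else dpi / (occ_mix Pp pol P0 P h x a + eps * dpi))
    | pi in Pi].

End MDP.

From mathcomp Require Import all_boot all_order all_algebra.
From mathcomp Require Import all_classical all_reals all_analysis.
From mathcomp Require Import measurable_realfun ring lra.
Set Implicit Arguments. Unset Strict Implicit. Unset Printing Implicit Defensive.
Import Order.TTheory GRing.Theory Num.Theory.
Local Open Scope classical_set_scope.
Local Open Scope ring_scope.

(* Write u = d^pi_h, q = d^p_h and D = q + eps u.  For every l > 0, AM-GM gives
   u g <= (l/2) u^2/D + D g^2/(2 l) pointwise, and D g^2 <= q g^2 + eps B u g.
   Summing over (x, a), with E = E^pi[g] and M = E^p[g^2], this reads
   E <= (l/2) Psi + (M + eps B E)/(2 l) for all l > 0, hence
   E^2 <= Psi (M + eps B E), and solving this quadratic inequality gives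
   E <= sqrt (Psi M) + Psi eps B. *)

Section ExtendedSums.
Context {R : realType}.
Local Open Scope ereal_scope.

Lemma EFin_fine_le (x : \bar R) : 0 <= x -> (fine x)%:E <= x.
Proof. by case: x => //= _; rewrite leey. Qed.

Lemma esumZl_EFin_le (T : choiceType) (c : R) (f : T -> R) : (0 <= c)%R ->
  (forall t, 0 <= f t)%R ->
  \esum_(t in [set: T]) (c * f t)%:E <= c%:E * \esum_(t in [set: T]) (f t)%:E.
Proof.
move=> c0 f0; apply: ge_ereal_sup => _ [F [finF _] <-] /=.
under eq_fsbigr do rewrite EFinM.
rewrite -ge0_mule_fsumr => [|t]; last by rewrite lee_fin.
by apply: lee_wpmul2l; [rewrite lee_fin | apply: ereal_sup_ubound; exists F].
Qed.

Lemma esum_pair (T1 T2 : choiceType) (f : T1 -> T2 -> \bar R) :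
  (forall i j, 0 <= f i j) ->
  \esum_(p in [set: (T1 * T2)%type]) f p.1 p.2 =
  \esum_(i in [set: T1]) \esum_(j in [set: T2]) f i j.
Proof.
move=> f0; rewrite esum_esum //; congr esum.
by apply/seteqP; split => // [[]].
Qed.

Lemma esum_swap (T1 T2 : choiceType) (f : T1 -> T2 -> \bar R) :
  (forall i j, 0 <= f i j) ->
  \esum_(i in [set: T1]) \esum_(j in [set: T2]) f i j =
  \esum_(j in [set: T2]) \esum_(i in [set: T1]) f i j.
Proof.
move=> f0; rewrite -esum_pair // -esum_pair //.
rewrite (@reindex_esum _ _ _ [set: T2 * T1] [set: T1 * T2] (fun p => (p.2, p.1))) //.
split=> [[] //|[a b] [c e] _ _ [-> ->] //|[a b] _].
by exists (b, a).
Qed.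

Lemma esum_weighted_dist_le (T U : choiceType) (w : T -> R) (q : T -> U -> R) :
  (forall t, 0 <= w t)%R -> (forall t, is_dist (q t)) ->
  \esum_(t in [set: T]) \esum_(u in [set: U]) (w t * q t u)%:E <=
  \esum_(t in [set: T]) (w t)%:E.
Proof.
move=> w0 q1; apply: le_esum => t _; have [q0 qsum] := q1 t.
apply: le_trans (esumZl_EFin_le (w0 t) q0) _.
by move: qsum; rewrite /psum => ->; rewrite mule1.
Qed.

(* Unlike [ge0_le_integral], no measurability is needed: for nonnegative
   functions the integral is a supremum over simple minorants. *)
Lemma ge0_le_integralT d (T : measurableType d) (mu : {measure set T -> \bar R})
  (f g : T -> \bar R) : (forall t, 0 <= f t) -> (forall t, f t <= g t) ->
  \int[mu]_t f t <= \int[mu]_t g t.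
Proof.
move=> f0 fg; have g0 t : 0 <= g t by exact: le_trans (f0 t) (fg t).
rewrite !ge0_integralTE //; apply: ereal_sup_le => _ [s sf <-].
by exists s => // t; exact: le_trans (sf t) (fg t).
Qed.

Lemma ge0_integral_prob_le d (T : measurableType d) (Pr : probability T R)
  (f : T -> \bar R) (c : R) : (forall t, 0 <= f t <= c%:E) -> \int[Pr]_t f t <= c%:E.
Proof.
move=> f0c; have -> : c%:E = \int[Pr]_t (cst c%:E) t.
  by rewrite integral_cst // -[LHS]mule1; congr (_ * _); exact/esym/probability_setT.
by apply: ge0_le_integralT => t; case/andP: (f0c t).
Qed.

Lemma fin_num_of_bounds (x : \bar R) (c : R) : 0 <= x -> x <= c%:E -> x \is a fin_num.
Proof. by move=> x0 xc; rewrite ge0_fin_numE // (le_lt_trans xc) ?ltry. Qed.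

End ExtendedSums.

Section RealInequalities.
Context {R : realType}.
Implicit Types e psi m c q : R.

Lemma sqr_le_of_amgm e psi q : 0 <= e -> 0 <= psi -> 0 <= q ->
  (forall l, 0 < l -> e <= l / 2 * psi + q / (2 * l)) -> e ^+ 2 <= psi * q.
Proof.
move=> e0 psi0 q0 amgm; have [e_le0|e_gt0] := leP e 0; first by nra.
(* take l = q / e, or l = e / (psi + 1) to refute the case q = 0 *)
have [q_le0|q_gt0] := leP q 0.
  have psi1_gt0 : 0 < psi + 1 by lra.
  have := amgm _ (divr_gt0 e_gt0 psi1_gt0).
  have -> : q = 0 by lra.
  have -> : e / (psi + 1) / 2 * psi = (e * psi) / (2 * (psi + 1)) by field; lra.
  by rewrite mul0r addr0 ler_pdivlMr; nra.
have := amgm _ (divr_gt0 q_gt0 e_gt0).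
have -> : q / e / 2 * psi + q / (2 * (q / e)) = (q * psi / e + e) / 2.
  by field; apply/andP; split; lra.
rewrite ler_pdivlMr // => h.
have : e <= q * psi / e by lra.
by rewrite ler_pdivlMr //; nra.
Qed.

Lemma le_of_sqr_le_quadratic e psi m c : 0 <= psi -> 0 <= m -> 0 <= c ->
  e ^+ 2 <= psi * (m + c * e) -> e <= Num.sqrt (psi * m) + psi * c.
Proof.
move=> psi0 m0 c0 quad; have [|e_gt] := leP e (psi * c).
  by move=> e_le; apply: le_trans e_le _; rewrite lerDr sqrtr_ge0.
suff : e - psi * c <= Num.sqrt (psi * m) by lra.
rewrite -[e - _]ger0_norm ?subr_ge0 ?(ltW e_gt) // -sqrtr_sqr.
rewrite ler_sqrt ?mulr_ge0 //.
have : 0 <= psi * c * (e - psi * c) by rewrite mulr_ge0 ?mulr_ge0 ?subr_ge0 ?(ltW e_gt).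
nra.
Qed.

End RealInequalities.

Section CoverageRatio.
Context {R : realType}.
Variable eps : R.
Hypothesis eps_gt0 : 0 < eps.

Definition cov_ratio (q u : R) : R := if u == 0 then 0 else u / (q + eps * u).

Lemma cov_ratio_ge0 (q u : R) : 0 <= q -> 0 <= u -> 0 <= cov_ratio q u.
Proof.
rewrite /cov_ratio => q0 u0; case: eqP => // _.
by rewrite divr_ge0 // addr_ge0 // mulr_ge0 // ltW.
Qed.

Lemma cov_ratio_le_inv (q u : R) : 0 <= q -> 0 <= u -> cov_ratio q u <= eps^-1.
Proof.
rewrite /cov_ratio => q0 u0; case: eqP => [_|/eqP u_neq0]; first by rewrite invr_ge0 ltW.
have u_gt0 : 0 < u by rewrite lt_neqAle eq_sym u_neq0.
rewrite ler_pdivrMr ?ltr_wpDl ?mulr_gt0 // mulrDr mulrA mulVf ?gt_eqF // mul1r.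
by rewrite lerDr mulr_ge0 // invr_ge0 ltW.
Qed.

Lemma cov_ratio_amgm (q u g B l : R) : 0 <= q -> 0 <= u -> 0 <= g -> g <= B -> 0 < l ->
  u * g <= l / 2 * (u * cov_ratio q u) + (q * g ^+ 2 + eps * B * (u * g)) / (2 * l).
Proof.
rewrite /cov_ratio => q0 u0 g0 gB l_gt0; case: eqP => [->|/eqP u_neq0].
  by rewrite !(mul0r, mulr0) add0r addr0 divr_ge0 ?mulr_ge0 ?sqr_ge0 //; lra.
have u_gt0 : 0 < u by rewrite lt_neqAle eq_sym u_neq0.
have D_gt0 : 0 < q + eps * u by rewrite ltr_wpDl ?mulr_gt0.
(* AM-GM slack plus the cost of replacing eps u g^2 by eps B u g *)
rewrite -subr_ge0.
have -> : l / 2 * (u * (u / (q + eps * u))) + (q * g ^+ 2 + eps * B * (u * g)) / (2 * l)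
    - u * g = (l * u - (q + eps * u) * g) ^+ 2 / (2 * l * (q + eps * u))
              + eps * u * g * (B - g) / (2 * l).
  by field; apply/andP; split; lra.
by rewrite addr_ge0 // divr_ge0 ?sqr_ge0 ?mulr_ge0 ?subr_ge0
  ?(ltW l_gt0) ?(ltW D_gt0) ?(ltW eps_gt0).
Qed.

End CoverageRatio.

Section Occupancy.
Context {R : realType} {X A : countType}.
Variables (H : nat) (P0 : X -> R) (P : @mdp_kernel R X A).
Hypothesis hM : is_mdp H P0 P.
Variable pi : @mdp_policy R X A.
Hypothesis hpi : is_policy H pi.
Local Open Scope ereal_scope.

Lemma occ_ge0 k x a : (k < H)%N -> (0 <= occ P0 P pi k x a)%R.
Proof.
have [[P0_ge0 _] Pdist] := hM; elim: k x a => [|k IH] x a hk /=.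
  by rewrite mulr_ge0 // (hpi x hk).1.
rewrite mulr_ge0 ?(hpi x hk).1 // fine_ge0 // esum_ge0 // => -[y b] _.
by rewrite lee_fin mulr_ge0 ?IH ?(Pdist _ _ _ (ltnW hk)).1 // ltnW.
Qed.

Lemma occ_mass_le1 k : (k < H)%N ->
  \esum_(xa in [set: X * A]) (occ P0 P pi k xa.1 xa.2)%:E <= 1.
Proof.
have [[P0_ge0 P0sum] Pdist] := hM; elim: k => [|k IH] hk /=.
  rewrite (esum_pair (f := fun x a => (P0 x * pi 0 x a)%:E)) => [|x a].
    apply: le_trans (esum_weighted_dist_le P0_ge0 (fun x => hpi x hk)) _.
    by move: P0sum; rewrite /psum => ->.
  by rewrite lee_fin mulr_ge0 // (hpi x hk).1.
have hk' := ltnW hk.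
have occP_ge0 xa y : (0 <= occ P0 P pi k xa.1 xa.2 * P k xa.1 xa.2 y)%R.
  by rewrite mulr_ge0 ?occ_ge0 ?(Pdist _ _ _ hk').1.
pose next y := \esum_(xa in [set: X * A]) (occ P0 P pi k xa.1 xa.2 * P k xa.1 xa.2 y)%:E.
have next0 y : 0 <= next y by apply: esum_ge0 => xa _; rewrite lee_fin.
rewrite (esum_pair (f := fun y a => (fine (next y) * pi k.+1 y a)%:E)) => [|y a]; last first.
  by rewrite lee_fin mulr_ge0 ?fine_ge0 ?(hpi y hk).1.
apply: le_trans (esum_weighted_dist_le (fun y => fine_ge0 (next0 y)) (fun y => hpi y hk)) _.
apply: le_trans (IH hk'); apply: (@le_trans _ _ (\esum_(y in [set: X]) next y)).
  by apply: le_esum => y _; exact: EFin_fine_le.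
rewrite /next esum_swap => [|y xa]; last by rewrite lee_fin.
exact: (esum_weighted_dist_le (fun xa => occ_ge0 xa.1 xa.2 hk')
          (fun xa => Pdist k xa.1 xa.2 hk')).
Qed.

Lemma occ_le1 k x a : (k < H)%N -> (occ P0 P pi k x a <= 1)%R.
Proof.
move=> hk; rewrite -lee_fin; apply: le_trans (occ_mass_le1 hk).
apply: esum_ge; exists [set (x, a)]; first by split; [exact: finite_set1|].
by rewrite fsbig_set1.
Qed.

Lemma Epi_ge0 k f : (k < H)%N -> (forall x a, 0 <= f x a)%R -> 0 <= Epi P0 P pi k f.
Proof.
by move=> hk f0; apply: esum_ge0 => xa _; rewrite lee_fin mulr_ge0 ?occ_ge0.
Qed.

Lemma Epi_le k f (c : R) : (k < H)%N -> (0 <= c)%R ->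
  (forall x a, 0 <= f x a <= c)%R -> Epi P0 P pi k f <= c%:E.
Proof.
move=> hk c0 f0c; apply: (@le_trans _ _
   (\esum_(xa in [set: X * A]) (c * occ P0 P pi k xa.1 xa.2)%:E)).
  apply: le_esum => xa _; rewrite lee_fin mulrC ler_wpM2r ?occ_ge0 //.
  by case/andP: (f0c xa.1 xa.2).
apply: le_trans (esumZl_EFin_le c0 (fun xa => occ_ge0 xa.1 xa.2 hk)) _.
by rewrite -[leRHS]mule1 lee_wpmul2l ?lee_fin ?occ_mass_le1.
Qed.

End Occupancy.

Section Mixture.
Context {R : realType} {X A : countType}.
Variables (H : nat) (P0 : X -> R) (P : @mdp_kernel R X A).
Hypothesis hM : is_mdp H P0 P.
Variables (d : measure_display) (I : measurableType d) (Pp : probability I R).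
Variable pol : I -> @mdp_policy R X A.
Hypothesis hpol : forall i, is_policy H (pol i).
Variable k : nat.
Hypothesis hk : (k < H)%N.
Local Open Scope ereal_scope.

Lemma occ_mixE x a :
  (occ_mix Pp pol P0 P k x a)%:E = \int[Pp]_i (occ P0 P (pol i) k x a)%:E.
Proof.
have occ01 i : 0 <= (occ P0 P (pol i) k x a)%:E <= 1%:E.
  by rewrite !lee_fin (occ_ge0 hM (hpol i) _ _ hk) (occ_le1 hM (hpol i) _ _ hk).
have int_ge0 : 0 <= \int[Pp]_i (occ P0 P (pol i) k x a)%:E.
  by apply: integral_ge0 => i _; case/andP: (occ01 i).
rewrite /occ_mix fineK // ge0_fin_numE //.
by apply: le_lt_trans (ge0_integral_prob_le Pp occ01) _; rewrite ltry.
Qed.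

Lemma occ_mix_ge0 x a : (0 <= occ_mix Pp pol P0 P k x a)%R.
Proof.
by rewrite -lee_fin occ_mixE integral_ge0 // => i _; rewrite lee_fin (occ_ge0 hM (hpol i)).
Qed.

Lemma Emix_ge0 f : (forall x a, 0 <= f x a)%R -> 0 <= Emix Pp pol P0 P k f.
Proof. by move=> f0; apply: integral_ge0 => i _; exact: (Epi_ge0 hM (hpol i)). Qed.

Lemma Emix_le f (c : R) : (0 <= c)%R -> (forall x a, 0 <= f x a <= c)%R ->
  Emix Pp pol P0 P k f <= c%:E.
Proof.
move=> c0 f0c; apply: ge0_integral_prob_le => i.
rewrite (Epi_le hM (hpol i)) ?andbT //; apply: (Epi_ge0 hM (hpol i)) => // x a.
by case/andP: (f0c x a).
Qed.

Hypothesis hmeas :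
  forall x a, measurable_fun [set: I] (fun i => occ P0 P (pol i) k x a).

Lemma esum_occ_mix_le_Emix f : (forall x a, 0 <= f x a)%R ->
  \esum_(xa in [set: X * A]) (occ_mix Pp pol P0 P k xa.1 xa.2 * f xa.1 xa.2)%:E
  <= Emix Pp pol P0 P k f.
Proof.
move=> f0; have occf0 i (xa : X * A) : 0 <= (occ P0 P (pol i) k xa.1 xa.2 * f xa.1 xa.2)%:E.
  by rewrite lee_fin mulr_ge0 ?(occ_ge0 hM (hpol i)).
apply: ge_ereal_sup => _ [F [finF _] <-] /=.
have -> : \sum_(xa \in F) (occ_mix Pp pol P0 P k xa.1 xa.2 * f xa.1 xa.2)%:E =
    \sum_(xa \in F) \int[Pp]_i (occ P0 P (pol i) k xa.1 xa.2 * f xa.1 xa.2)%:E.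
  apply: eq_fsbigr => xa _; rewrite EFinM occ_mixE -ge0_integralZr ?lee_fin //.
  - exact/measurable_EFinP/hmeas.
  - by move=> i _; rewrite lee_fin (occ_ge0 hM (hpol i)).
rewrite -(@ge0_integral_fsum _ _ _ Pp _ measurableT _
  (fun xa i => (occ P0 P (pol i) k xa.1 xa.2 * f xa.1 xa.2)%:E)) //; last first.
  by move=> xa; exact/measurable_EFinP/measurable_funM.
apply: ge0_le_integralT => [i|i]; first exact: fsume_ge0.
by apply: ereal_sup_ubound; exists F.
Qed.

Variable Pi : set (@mdp_policy R X A).
Hypothesis hPi : forall pi, Pi pi -> is_policy H pi.
Variable eps : R.
Hypothesis eps_gt0 : (0 < eps)%R.

Lemma Epi_cov_le_Psi pi : Pi pi ->
  Epi P0 P pi k (fun x a => cov_ratio eps (occ_mix Pp pol P0 P k x a) (occ P0 P pi k x a))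
  <= Psi Pp pol P0 P Pi k eps.
Proof. by move=> hpi; apply: ereal_sup_ubound; exists pi. Qed.

Lemma Psi_ge0 pi : Pi pi -> 0 <= Psi Pp pol P0 P Pi k eps.
Proof.
move=> hpi; apply: le_trans (Epi_cov_le_Psi hpi).
apply: (Epi_ge0 hM (hPi hpi)) => // x a.
have q0 := occ_mix_ge0 x a; have u0 := occ_ge0 hM (hPi hpi) x a hk.
by apply: cov_ratio_ge0.
Qed.

Lemma Psi_le_inv : Psi Pp pol P0 P Pi k eps <= (eps^-1)%:E.
Proof.
apply: ge_ereal_sup => _ [pi hpi <-]; apply: (Epi_le hM (hPi hpi)) => //.
  by rewrite invr_ge0 ltW.
move=> x a; have q0 := occ_mix_ge0 x a.
have u0 := occ_ge0 hM (hPi hpi) x a hk.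
by rewrite (cov_ratio_ge0 eps_gt0) ?(cov_ratio_le_inv eps_gt0).
Qed.

Lemma Epi_le_amgm pi (g : X -> A -> R) (B l : R) : Pi pi ->
  (forall x a, 0 <= g x a <= B)%R -> (0 <= B)%R -> (0 < l)%R ->
  Epi P0 P pi k g <= (l / 2)%:E * Psi Pp pol P0 P Pi k eps
    + ((2 * l)^-1)%:E * (Emix Pp pol P0 P k (fun x a => g x a ^+ 2)%R
                         + (eps * B)%:E * Epi P0 P pi k g).
Proof.
move=> hpi hg B0 l_gt0; have pi_pol := hPi hpi.
have u0 x a := occ_ge0 hM pi_pol x a hk.
have q0 x a := occ_mix_ge0 x a.
have g0 x a : (0 <= g x a)%R by case/andP: (hg x a).
have r0 x a := cov_ratio_ge0 eps_gt0 (q0 x a) (u0 x a).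
have l2_ge0 : (0 <= l / 2)%R by rewrite divr_ge0 ?ltW.
have l2inv_ge0 : (0 <= (2 * l)^-1)%R by rewrite invr_ge0 mulr_ge0 ?ltW.
apply: (@le_trans _ _ (\esum_(xa in [set: X * A])
   ((l / 2 * (occ P0 P pi k xa.1 xa.2
              * cov_ratio eps (occ_mix Pp pol P0 P k xa.1 xa.2) (occ P0 P pi k xa.1 xa.2)))%:E
    + ((2 * l)^-1 * (occ_mix Pp pol P0 P k xa.1 xa.2 * g xa.1 xa.2 ^+ 2
                     + eps * B * (occ P0 P pi k xa.1 xa.2 * g xa.1 xa.2)))%:E))).
  apply: le_esum => -[x a] _; rewrite -EFinD lee_fin [(_^-1 * _)%R]mulrC.
  by apply: cov_ratio_amgm; case/andP: (hg x a).
rewrite esumD => [|xa _|xa _]; last 2 first.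
- by rewrite lee_fin mulr_ge0 // mulr_ge0 ?u0 ?r0.
- by rewrite lee_fin mulr_ge0 // addr_ge0 ?mulr_ge0 ?q0 ?u0 ?g0 ?sqr_ge0 ?B0
    ?(ltW eps_gt0).
apply: leeD.
  apply: le_trans (esumZl_EFin_le l2_ge0 (fun xa => mulr_ge0 (u0 xa.1 xa.2) (r0 xa.1 xa.2))) _.
  by rewrite lee_wpmul2l ?lee_fin ?Epi_cov_le_Psi.
have qg0 xa : (0 <= occ_mix Pp pol P0 P k xa.1 xa.2 * g xa.1 xa.2 ^+ 2)%R.
  by rewrite mulr_ge0 ?q0 ?sqr_ge0.
have eBug0 xa : (0 <= eps * B * (occ P0 P pi k xa.1 xa.2 * g xa.1 xa.2))%R.
  by rewrite !mulr_ge0 ?u0 ?g0 ?(ltW eps_gt0).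
apply: le_trans (esumZl_EFin_le l2inv_ge0 (fun xa => addr_ge0 (qg0 xa) (eBug0 xa))) _.
rewrite lee_wpmul2l ?lee_fin //.
under eq_esum do rewrite EFinD.
rewrite esumD => [|xa _|xa _]; rewrite ?lee_fin //.
apply: leeD; first exact: (esum_occ_mix_le_Emix (fun x a => sqr_ge0 (g x a))).
exact: esumZl_EFin_le (mulr_ge0 (ltW eps_gt0) B0)
  (fun xa => mulr_ge0 (u0 xa.1 xa.2) (g0 xa.1 xa.2)).
Qed.

End Mixture.

Theorem proposition3p1 (R : realType) (X A : countType) (H : nat)
  (P0 : X -> R) (P : @mdp_kernel R X A)
  (hM : is_mdp H P0 P)
  (Pi : set (@mdp_policy R X A)) (hPi : forall pi, Pi pi -> is_policy H pi)
  (h : nat) (hh : (h < H)%N)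
  (d : measure_display) (I : measurableType d) (Pp : probability I R)
  (pol : I -> @mdp_policy R X A) (hpol : forall i, is_policy H (pol i))
  (hmeas : forall x a, measurable_fun [set: I] (fun i => occ P0 P (pol i) h x a))
  (B : R) (g : X -> A -> R) (hg : forall x a, 0 <= g x a <= B)
  (pi : @mdp_policy R X A) (hpi : Pi pi)
  (eps : R) (heps : 0 < eps) :
  let psi := fine (Psi Pp pol P0 P Pi h eps) in
  fine (Epi P0 P pi h g) <=
    2 * Num.sqrt (psi * fine (Emix Pp pol P0 P h (fun x a => g x a ^+ 2)))
    + psi * (eps * B).
Proof.
cbv zeta; set psi := fine (Psi _ _ _ _ _ _ _); set E := Epi P0 P pi h g; set M := Emix _ _ _ _ _ _.
have Psi0 := Psi_ge0 hM Pp hpol hh hPi heps hpi.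
have [B_lt0|B0] := ltP B 0.
  (* then [hg] makes [X * A] empty *)
  have Epi0 q f : Epi P0 P q h f = 0%E.
    by apply: esum1 => -[x a] _; exfalso; case/andP: (hg x a) => g0 gB; lra.
  have PsiE0 : Psi Pp pol P0 P Pi h eps = 0%E.
    by apply/eqP; rewrite eq_le Psi0 andbT; apply: ge_ereal_sup => _ [q _ <-]; rewrite Epi0.
  by rewrite /psi PsiE0 /E Epi0 !mul0r sqrtr0 mulr0 addr0.
have g0 x a : 0 <= g x a by case/andP: (hg x a).
have g2B x a : 0 <= g x a ^+ 2 <= B ^+ 2.
  by case/andP: (hg x a) => gx0 gxB; rewrite sqr_ge0 ler_pXn2r ?nnegrE.
have E0 := Epi_ge0 hM (hPi pi hpi) hh g0.
have M0 := Emix_ge0 hM Pp hpol hh (fun x a => sqr_ge0 (g x a)).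
have E_fin := fin_num_of_bounds E0 (Epi_le hM (hPi pi hpi) hh B0 hg).
have M_fin := fin_num_of_bounds M0 (Emix_le hM Pp hpol hh (sqr_ge0 B) g2B).
have Psi_fin := fin_num_of_bounds Psi0 (Psi_le_inv hM Pp hpol hh hPi heps).
have amgm l : 0 < l -> fine E <= l / 2 * psi + (fine M + eps * B * fine E) / (2 * l).
  move=> l_gt0; rewrite -lee_fin fineK // EFinD [(l / 2 * _)%:E]EFinM.
  rewrite [(_ / (2 * l))%:E]EFinM EFinD [(eps * B * _)%:E]EFinM !fineK //.
  rewrite [(_ * ((2 * l)^-1)%:E)%E]muleC.
  exact (Epi_le_amgm hM Pp hpol hh hmeas hPi heps hpi hg B0 l_gt0).
have eB0 : 0 <= eps * B by rewrite mulr_ge0 // ltW.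
have [psi0 e0 m0] := And3 (fine_ge0 Psi0) (fine_ge0 E0) (fine_ge0 M0).
have quad := sqr_le_of_amgm e0 psi0 (addr_ge0 m0 (mulr_ge0 eB0 e0)) amgm.
apply: le_trans (le_of_sqr_le_quadratic psi0 m0 eB0 quad) _.
by rewrite lerD2r ler_peMl ?sqrtr_ge0 ?ler1n.
Qed.
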